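(* Fix $t>1$ and define the sequence $(g_{n,t})_{n\ge0}$ by $g_{0,t}=1$ and $g_{n,t}=n\,g_{n-1,t}^{\,t}$ for $n\ge1$. Then for all $n\ge0$, $$g_{n,t}=\sigma_t^{\,t^n}\exp\!\left[\frac1t\frac{\partial\Phi}{\partial s}\!\left(\frac1t,0,n+1\right)\right]=\sigma_t^{\,t^n}\prod_{m=1}^{\infty}(m+n)^{-1/t^m},$$ where $\sigma_t=\prod_{n=1}^{\infty}n^{1/t^n}$.
   Context: $\Phi(z,s,u)$ is the Lerch transcendent: for $|z|<1$, $u>0$ and all $s\in\mathbb{C}$, $\Phi(z,s,u)=\sum_{n=0}^{\infty}\frac{z^n}{(n+u)^s}$; $\frac{\partial\Phi}{\partial s}$ is its partial derivative in $s$. *)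

From Stdlib Require Import Reals.
From Coquelicot Require Import Coquelicot.
Open Scope R_scope.

Definition LerchPhi (z s u : R) : R :=
  Series (fun k : nat => z ^ k / Rpower (INR k + u) s).

Fixpoint g (t : R) (n : nat) : R :=
  match n with
  | O => 1
  | S m => INR (S m) * Rpower (g t m) t
  end.

Fixpoint prod1 (f : nat -> R) (N : nat) : R :=
  match N with
  | O => 1
  | S M => prod1 f M * f (S M)
  end.

Definition sigma_partial (t : R) (N : nat) : R :=
  prod1 (fun k => Rpower (INR k) (/ t ^ k)) N.

Definition sigmaT (t : R) : R := real (Lim_seq (sigma_partial t)).

From Stdlib Require Import Reals Lra Lia.
From Coquelicot Require Import Coquelicot.
Open Scope R_scope.

(* Let [L z c = sum_k z^k ln (k + c)] ([log_series z c]).  For [0 < z < 1] the series defining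
   [LerchPhi z s c] and its termwise [s]-derivative are dominated, uniformly for
   [|s| < 1], by [z^k (k + c)^2], so [dPhi/ds (z, 0, c) = - L z c].  Passing to
   logarithms, [ln sigma_t = L (1/t) 1 / t] and the infinite product equals
   [exp (- L (1/t) (n+1) / t)], so both identities say
   [ln g_{n,t} = t^n ln sigma_t - L (1/t) (n+1) / t].  This holds for [n = 0],
   and is preserved by the recursion because of the shift rule
   [L z c = ln c + z L z (c + 1)]. *)

Lemma ln_lt_id x : 0 < x -> ln x < x.
Proof.
  intro hx. rewrite <- (ln_exp x) at 2. apply ln_increasing; [exact hx|].
  pose proof (exp_ineq1 x). destruct (Req_dec x 0); subst; [rewrite exp_0 in *|]; lra.
Qed.

Lemma exp_neg_mul_ln_le x y : 1 <= x -> Rabs y < 1 -> exp (- (y * ln x)) <= x.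
Proof.
  intros hx hy. apply Rabs_def2 in hy.
  replace (exp (- (y * ln x))) with (Rpower x (- y)) by (unfold Rpower; f_equal; ring).
  rewrite <- (Rpower_1 x) at 2 by lra. apply Rle_Rpower; lra.
Qed.

Section LerchSeries.

Variables z c : R.
Hypothesis hz : 0 < z < 1.
Hypothesis hc : 1 <= c.

Let shift_ge1 k : 1 <= INR k + c.
Proof. pose proof (pos_INR k); lra. Qed.

Let shift_pos k : 0 < INR k + c.
Proof. pose proof (shift_ge1 k); lra. Qed.

Let ln_shift_ge0 k : 0 <= ln (INR k + c).
Proof. rewrite <- ln_1. apply ln_le; [lra | apply shift_ge1]. Qed.

Let pow_z_pos k : 0 < z ^ k.
Proof. apply pow_lt; lra. Qed.

Definition lerch_term (s : R) (k : nat) : R := z ^ k * exp (- (s * ln (INR k + c))).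

Definition lerch_dterm (s : R) (k : nat) : R :=
  - (z ^ k * ln (INR k + c) * exp (- (s * ln (INR k + c)))).

Definition lerch_majorant (k : nat) : R := z ^ k * (INR k + c) ^ 2.

Lemma lerch_majorant_ge0 k : 0 <= lerch_majorant k.
Proof. apply Rmult_le_pos; [apply Rlt_le, pow_z_pos | apply pow2_ge_0]. Qed.

Lemma lerch_majorant_ratio k :
  Rabs (lerch_majorant (S k) / lerch_majorant k) = z * ((1 + / (INR k + c)) * (1 + / (INR k + c))).
Proof.
  pose proof (shift_pos k). rewrite Rabs_pos_eq.
  - unfold lerch_majorant. rewrite S_INR. simpl. field. split; [lra | apply pow_nonzero; lra].
  - apply Rle_mult_inv_pos; [apply lerch_majorant_ge0|].
    apply Rmult_lt_0_compat; [apply pow_z_pos | apply pow_lt; lra].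
Qed.

Lemma ex_series_lerch_majorant : ex_series lerch_majorant.
Proof.
  apply ex_series_ext with (fun k => Rabs (lerch_majorant k)).
  { intro k. apply Rabs_pos_eq, lerch_majorant_ge0. }
  apply ex_series_DAlembert with z; [lra| |].
  - intro k. apply Rmult_integral_contrapositive; split.
    + apply Rgt_not_eq, pow_z_pos.
    + apply pow_nonzero, Rgt_not_eq, shift_pos.
  - apply is_lim_seq_ext with (fun k => z * ((1 + / (INR k + c)) * (1 + / (INR k + c)))).
    { intro k. symmetry. apply lerch_majorant_ratio. }
    assert (inv_lim : is_lim_seq (fun k => / (INR k + c)) 0).
    { replace (Finite 0) with (Rbar_inv p_infty) by reflexivity.
      apply is_lim_seq_inv; [|discriminate].
      eapply is_lim_seq_plus; [apply is_lim_seq_INR | apply is_lim_seq_const | constructor]. }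
    assert (factor_lim : is_lim_seq (fun k => 1 + / (INR k + c)) 1).
    { replace (Finite 1) with (Finite (1 + 0)) by (f_equal; ring).
      apply is_lim_seq_plus'; [apply is_lim_seq_const | exact inv_lim]. }
    replace (Finite z) with (Finite (z * (1 * 1))) by (f_equal; ring).
    apply is_lim_seq_mult'; [apply is_lim_seq_const|].
    apply is_lim_seq_mult'; exact factor_lim.
Qed.

Lemma ex_series_lerch_dominated (f : nat -> R) :
  (forall k, Rabs (f k) <= lerch_majorant k) -> ex_series f.
Proof.
  intro hf. apply (@ex_series_le R_AbsRing R_CompleteNormedModule f lerch_majorant hf).
  exact ex_series_lerch_majorant.
Qed.

Lemma lerch_term_bound s k : Rabs s < 1 -> Rabs (lerch_term s k) <= lerch_majorant k.
Proof.
  intro hs. unfold lerch_term, lerch_majorant. pose proof (shift_pos k).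
  pose proof (shift_ge1 k). pose proof (exp_neg_mul_ln_le (INR k + c) s (shift_ge1 k) hs).
  pose proof (exp_pos (- (s * ln (INR k + c)))). pose proof (pow_z_pos k).
  rewrite Rabs_pos_eq by (apply Rmult_le_pos; lra).
  apply Rmult_le_compat_l; [lra|]. nra.
Qed.

Lemma lerch_dterm_bound s k : Rabs s < 1 -> Rabs (lerch_dterm s k) <= lerch_majorant k.
Proof.
  intro hs. unfold lerch_dterm, lerch_majorant. pose proof (shift_pos k).
  pose proof (shift_ge1 k). pose proof (exp_neg_mul_ln_le (INR k + c) s (shift_ge1 k) hs).
  pose proof (exp_pos (- (s * ln (INR k + c)))). pose proof (pow_z_pos k).
  pose proof (ln_shift_ge0 k). pose proof (ln_lt_id (INR k + c) (shift_pos k)).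
  rewrite Rabs_Ropp, Rabs_pos_eq by (repeat apply Rmult_le_pos; lra).
  rewrite Rmult_assoc. apply Rmult_le_compat_l; [lra|].
  simpl. rewrite Rmult_1_r. apply Rmult_le_compat; lra.
Qed.

Lemma LerchPhi_lerch_term s : LerchPhi z s c = Series (lerch_term s).
Proof.
  apply Series_ext. intro k. unfold lerch_term, Rpower. now rewrite exp_Ropp.
Qed.

Lemma is_derive_lerch_term k s : is_derive (fun s => lerch_term s k) s (lerch_dterm s k).
Proof. unfold lerch_term, lerch_dterm. auto_derive; [easy | ring]. Qed.

Lemma derivable_pt_lim_lerch_partial_sum n s :
  derivable_pt_lim (SP (fun k s => lerch_term s k) n) s (SP (fun k s => lerch_dterm s k) n s).
Proof.
  apply is_derive_Reals. induction n as [|n IHn]; unfold SP in *; simpl.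
  - apply is_derive_lerch_term.
  - apply (is_derive_plus (fun s => sum_f_R0 (fun k => lerch_term s k) n)
                          (fun s => lerch_term s (S n))); [exact IHn | apply is_derive_lerch_term].
Qed.

Lemma CVN_r_lerch_dterm : CVN_r (fun k s => lerch_dterm s k) (mkposreal 1 Rlt_0_1).
Proof.
  exists lerch_majorant, (Series lerch_majorant). split.
  - apply is_series_Reals.
    apply is_series_ext with lerch_majorant.
    { intro k. symmetry. apply Rabs_pos_eq, lerch_majorant_ge0. }
    apply Series_correct, ex_series_lerch_majorant.
  - intros k s hs. apply lerch_dterm_bound.
    unfold Boule in hs. simpl in hs. now rewrite Rminus_0_r in hs.
Qed.

Definition log_series : R := Series (fun k => z ^ k * ln (INR k + c)).

Lemma ex_log_series : ex_series (fun k => z ^ k * ln (INR k + c)).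
Proof.
  apply ex_series_lerch_dominated. intro k. unfold lerch_majorant.
  pose proof (pow_z_pos k). pose proof (ln_shift_ge0 k).
  pose proof (ln_lt_id (INR k + c) (shift_pos k)).
  rewrite Rabs_pos_eq by (apply Rmult_le_pos; lra).
  apply Rmult_le_compat_l; [lra|]. simpl. pose proof (pos_INR k). nra.
Qed.

Lemma is_derive_LerchPhi_0 : is_derive (fun s => LerchPhi z s c) 0 (- log_series).
Proof.
  apply is_derive_ext with (fun s => Series (lerch_term s)).
  { intro s. symmetry. apply LerchPhi_lerch_term. }
  destruct (CVN_CVU_r _ _ CVN_r_lerch_dterm 0) as [e He].
  { rewrite Rabs_R0. simpl. lra. }
  set (d := mkposreal (Rmin e 1) (Rmin_pos _ _ (cond_pos e) Rlt_0_1)).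
  assert (in_ball : forall s, Boule 0 d s -> Rabs s < 1 /\ Boule 0 e s).
  { intros s hs. unfold Boule in *. simpl in *. rewrite Rminus_0_r in *.
    pose proof (Rmin_l e 1). pose proof (Rmin_r e 1). split; lra. }
  replace (- log_series) with (Series (fun k => lerch_dterm 0 k)).
  2:{ unfold log_series. rewrite <- Series_opp. apply Series_ext. intro k.
      unfold lerch_dterm. rewrite Rmult_0_l, Ropp_0, exp_0. ring. }
  apply is_derive_Reals.
  apply (CVU_derivable (SP (fun k s => lerch_term s k)) (SP (fun k s => lerch_dterm s k))
           _ (fun s => Series (fun k => lerch_dterm s k)) 0 d).
  - intros eps heps. destruct (He eps heps) as [N HN]. exists N.
    intros m s hm hs. apply HN; [exact hm | apply in_ball, hs].
  - intros s hs. apply is_series_Reals, Series_correct, ex_series_lerch_dominated.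
    intro k. apply lerch_term_bound, in_ball, hs.
  - intros n s _. apply derivable_pt_lim_lerch_partial_sum.
  - unfold Boule. rewrite Rminus_0_r, Rabs_R0. apply cond_pos.
Qed.

Lemma is_series_scal_log_series a :
  is_series (fun k => a * (z ^ k * ln (INR k + c))) (a * log_series).
Proof. apply (@is_series_scal_l R_AbsRing), Series_correct, ex_log_series. Qed.

End LerchSeries.

Lemma log_series_shift z c : 0 < z < 1 -> 1 <= c ->
  log_series z c = ln c + z * log_series z (c + 1).
Proof.
  intros hz hc. unfold log_series. rewrite Series_incr_1 by now apply ex_log_series.
  rewrite pow_O, Rmult_1_l, Rplus_0_l. f_equal.
  rewrite <- Series_scal_l. apply Series_ext. intro k.
  rewrite S_INR. replace (INR k + 1 + c) with (INR k + (c + 1)) by ring. simpl. ring.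
Qed.

Lemma prod1_Rpower_S (f e : nat -> R) N :
  prod1 (fun m => Rpower (f m) (e m)) (S N) = exp (sum_f_R0 (fun k => e (S k) * ln (f (S k))) N).
Proof.
  induction N as [|N IHN]; simpl.
  - now rewrite Rmult_1_l.
  - simpl in IHN. rewrite IHN, exp_plus. reflexivity.
Qed.

Lemma is_lim_seq_prod1_Rpower (f e : nat -> R) l :
  is_series (fun k => e (S k) * ln (f (S k))) l ->
  is_lim_seq (prod1 (fun m => Rpower (f m) (e m))) (exp l).
Proof.
  intro hl. apply is_lim_seq_incr_1.
  apply is_lim_seq_ext with (fun N => exp (sum_f_R0 (fun k => e (S k) * ln (f (S k))) N)).
  { intro N. symmetry. apply prod1_Rpower_S. }
  apply is_lim_seq_continuous; [apply derivable_continuous_pt, derivable_pt_exp|].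
  now apply is_lim_seq_Reals, is_series_Reals.
Qed.

Lemma inv_in_unit_interval t : 1 < t -> 0 < / t < 1.
Proof.
  intro ht. split; [apply Rinv_0_lt_compat; lra|].
  rewrite <- Rinv_1. apply Rinv_lt_contravar; lra.
Qed.

Lemma g_exp_log_series t n : 1 < t ->
  g t n = exp (t ^ n * (/ t * log_series (/ t) 1) - / t * log_series (/ t) (INR n + 1)).
Proof.
  intro ht. pose proof (inv_in_unit_interval t ht) as hz.
  induction n as [|n IHn].
  - simpl g. rewrite Rplus_0_l, pow_O, Rmult_1_l, Rminus_diag. now rewrite exp_0.
  - change (g t (S n)) with (INR (S n) * Rpower (g t n) t).
    rewrite IHn. unfold Rpower. rewrite ln_exp.
    rewrite <- (exp_ln (INR (S n))) at 1 by (apply lt_0_INR; lia).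
    rewrite <- exp_plus. f_equal.
    rewrite (log_series_shift (/ t) (INR n + 1)) by (try pose proof (pos_INR n); lra).
    rewrite S_INR. simpl pow. field. lra.
Qed.

Theorem theorem20 (t : R) (ht : 1 < t) (n : nat) :
  (* sigma_t is a convergent infinite product *)
  is_lim_seq (sigma_partial t) (sigmaT t) /\
  (* dPhi/ds (1/t, s, n+1) exists at s = 0 *)
  is_derive (fun s => LerchPhi (/ t) s (INR n + 1)) 0
            (Derive (fun s => LerchPhi (/ t) s (INR n + 1)) 0) /\
  (* first equality *)
  g t n = Rpower (sigmaT t) (t ^ n) *
          exp (/ t * Derive (fun s => LerchPhi (/ t) s (INR n + 1)) 0) /\
  (* second equality: sigma_t^{t^n} prod_{m>=1} (m+n)^{-1/t^m} converges to g_{n,t} *)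
  is_lim_seq (fun N => Rpower (sigmaT t) (t ^ n) *
                       prod1 (fun m => Rpower (INR m + INR n) (- / t ^ m)) N)
             (g t n).
Proof.
  pose proof (inv_in_unit_interval t ht) as hz.
  assert (hc : 1 <= INR n + 1) by (pose proof (pos_INR n); lra).
  set (L := log_series (/ t)).
  assert (sigma_lim : is_lim_seq (sigma_partial t) (exp (/ t * L 1))).
  { apply is_lim_seq_prod1_Rpower.
    apply is_series_ext with (fun k => / t * ((/ t) ^ k * ln (INR k + 1))).
    - intro k. rewrite S_INR, <- pow_inv. simpl. ring.
    - apply is_series_scal_log_series; lra. }
  assert (sigmaT_eq : sigmaT t = exp (/ t * L 1)).
  { unfold sigmaT. now rewrite (is_lim_seq_unique _ _ sigma_lim). }
  assert (sigma_pow : Rpower (sigmaT t) (t ^ n) = exp (t ^ n * (/ t * L 1))).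
  { unfold Rpower. now rewrite sigmaT_eq, ln_exp. }
  pose proof (is_derive_LerchPhi_0 (/ t) (INR n + 1) hz hc) as hD.
  assert (Derive_eq : Derive (fun s => LerchPhi (/ t) s (INR n + 1)) 0 = - L (INR n + 1))
    by exact (is_derive_unique _ _ _ hD).
  rewrite Derive_eq, sigma_pow, (g_exp_log_series t n ht); fold L.
  split; [|split; [|split]]; [now rewrite sigmaT_eq | exact hD | rewrite <- exp_plus; f_equal; ring |].
  replace (t ^ n * (/ t * L 1) - / t * L (INR n + 1))
    with (t ^ n * (/ t * L 1) + - / t * L (INR n + 1)) by ring.
  rewrite exp_plus. apply is_lim_seq_mult'; [apply is_lim_seq_const|].
  apply is_lim_seq_prod1_Rpower.
  apply is_series_ext with (fun k => - / t * ((/ t) ^ k * ln (INR k + (INR n + 1)))).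
  - intro k. rewrite S_INR, <- pow_inv.
    replace (INR k + 1 + INR n) with (INR k + (INR n + 1)) by ring. simpl. ring.
  - now apply is_series_scal_log_series.
Qed.
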